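(* Let $p\in(0,1/2)$ and $\beta<0$. Then there exists $r_0=r_0(p,\beta)>0$ and a convex function $u$ with the following properties: - $u\in C^\infty(\Sigma_{\beta,r_0})$, $u$ is continuous up to $\varsigma_{\beta,r_0}$, and $u>0$ in $\Sigma_{\beta,r_0}$; - $u$ solves $\det D^2u=u^p$ in $\Sigma_{\beta,r_0}$; - $u=0$ on $\varsigma_{\beta,r_0}$.
   Context: For $\beta<0$ and $r_0>0$, define the ''wiping domain'' and its boundary curve by $$\Sigma_{\beta,r_0}=\{(x,y)\in\mathbb{R}^2:\ y>0,\ e^xy^\beta>r_0\},\qquad \varsigma_{\beta,r_0}=\{(x,y)\in\mathbb{R}^2:\ y>0,\ e^xy^\beta=r_0\}.$$ *)

From Stdlib Require Import Reals Lra.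
From Coquelicot Require Import Coquelicot.
Open Scope R_scope.

Definition Sigma (beta r0 : R) (z : R * R) : Prop :=
  0 < snd z /\ exp (fst z) * Rpower (snd z) beta > r0.

Definition varsigma (beta r0 : R) (z : R * R) : Prop :=
  0 < snd z /\ exp (fst z) * Rpower (snd z) beta = r0.

Definition continuous_on2 (D : R * R -> Prop) (f : R * R -> R) : Prop :=
  forall z, D z -> continuous f z.

Fixpoint Ck2 (k : nat) (D : R * R -> Prop) (f : R * R -> R) : Prop :=
  match k with
  | O => continuous_on2 D f
  | S k' =>
      continuous_on2 D f /\
      exists fx fy : R * R -> R,
        (forall z, D z ->
           is_derive (fun s => f (s, snd z)) (fst z) (fx z) /\
           is_derive (fun t => f (fst z, t)) (snd z) (fy z)) /\
        Ck2 k' D fx /\ Ck2 k' D fy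
  end.

Definition smooth_on2 (D : R * R -> Prop) (f : R * R -> R) : Prop :=
  forall k, Ck2 k D f.

Definition d_xx (f : R * R -> R) (z : R * R) : R :=
  Derive_n (fun s => f (s, snd z)) 2 (fst z).
Definition d_yy (f : R * R -> R) (z : R * R) : R :=
  Derive_n (fun t => f (fst z, t)) 2 (snd z).
Definition d_xy (f : R * R -> R) (z : R * R) : R :=
  Derive (fun t => Derive (fun s => f (s, t)) (fst z)) (snd z).

Definition hess_det (f : R * R -> R) (z : R * R) : R :=
  d_xx f z * d_yy f z - d_xy f z * d_xy f z.

(* Convexity of f on the (not necessarily convex) set D: f is convex along
   every line segment contained in D. *)
Definition convex_on2 (D : R * R -> Prop) (f : R * R -> R) : Prop :=
  forall a b : R * R,
    (forall t, 0 <= t <= 1 ->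
       D (t * fst a + (1 - t) * fst b, t * snd a + (1 - t) * snd b)) ->
    forall t, 0 <= t <= 1 ->
      f (t * fst a + (1 - t) * fst b, t * snd a + (1 - t) * snd b)
        <= t * f a + (1 - t) * f b.

From Stdlib Require Import Reals Lra Lia ClassicalEpsilon.
From Coquelicot Require Import Coquelicot.
Open Scope R_scope.

(* We take r0 = 1 and a = 2 / (2 - p), so that a > 1 and a p = 2a - 2.  In the
   similarity variable t = x + beta ln y the domain is {t > 0} and its boundary
   {t = 0}; we look for u = y^a g(t).  Then
     det D^2 u = y^(2a-2) (g'' (a (a-1) g - beta g') - a^2 g'^2),
   so the equation becomes an autonomous ODE for the profile g, with g(0) = 0.
   The file proceeds as follows:
   1. derivation helpers and C^k smoothness on (0, +oo) in one variable;
   2. Picard iteration: a global solution of P = 1 + int_0^s F(r, P r) dr for a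
      bounded, Lipschitz F;
   3. the first-order equation P' = (a^2 P^2 + s^p) / (P (a (a-1) s - beta P))
      for P = g' o g^-1, solved by 2. after truncating its right-hand side;
   4. g is the inverse of T(s) = int_0^s dr / P(r), so g' = P o g and g(0) = 0;
   5. the ansatz y^c phi(t): smoothness, continuity up to {t = 0}, its Hessian
      determinant, and its convexity along segments, where the second
      derivative is a quadratic form made nonnegative by the profile ODE;
   6. the theorem, assembled from 3.-5. *)

(** Derivation rules, restated with the real operations [+] and [*] so that
    they can be used with [eapply] without unfolding [plus]/[mult]/[scal]. *)

Lemma derive_plus f g x df dg : is_derive f x df -> is_derive g x dg ->
  is_derive (fun y => f y + g y) x (df + dg).
Proof. exact (is_derive_plus f g x df dg). Qed.

Lemma derive_mult f g x df dg : is_derive f x df -> is_derive g x dg ->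
  is_derive (fun y => f y * g y) x (df * g x + f x * dg).
Proof. intros Hf Hg. exact (is_derive_mult f g x df dg Hf Hg Rmult_comm). Qed.

Lemma derive_comp f g x df dg : is_derive f (g x) df -> is_derive g x dg ->
  is_derive (fun y => f (g y)) x (dg * df).
Proof. exact (is_derive_comp f g x df dg). Qed.

Lemma derive_const (c x : R) : is_derive (fun _ => c) x 0.
Proof. exact (is_derive_const c x). Qed.

Lemma derive_id (x : R) : is_derive (fun y => y) x 1.
Proof. exact (is_derive_id x). Qed.

Lemma derive_eq (f : R -> R) (x l l' : R) : l = l' -> is_derive f x l -> is_derive f x l'.
Proof. now intros ->. Qed.

Lemma derive_rpow (c y : R) : 0 < y ->
  is_derive (fun y => Rpower y c) y (c * Rpower y (c - 1)).
Proof. intros hy. apply is_derive_Reals, derivable_pt_lim_power, hy. Qed.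

Lemma derive_continuous (f : R -> R) (x l : R) : is_derive f x l -> continuous f x.
Proof. intros H. apply (ex_derive_continuous (V := R_NormedModule)). now exists l. Qed.

Lemma continuous_Rplus (f g : R -> R) x : continuous f x -> continuous g x ->
  continuous (fun y => f y + g y) x.
Proof. exact (continuous_plus f g x). Qed.

Lemma continuous_Rminus (f g : R -> R) x : continuous f x -> continuous g x ->
  continuous (fun y => f y - g y) x.
Proof. exact (continuous_minus f g x). Qed.

Lemma continuous_Rmult (f g : R -> R) x : continuous f x -> continuous g x ->
  continuous (fun y => f y * g y) x.
Proof. exact (continuous_mult f g x). Qed.

Lemma Rpower_pred (y c : R) : 0 < y -> Rpower y c = Rpower y (c - 1) * y.
Proof.
  intros hy. rewrite <- (Rpower_1 y) at 3 by exact hy.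
  rewrite <- Rpower_plus. f_equal; ring.
Qed.

Lemma Rpower_pos (y c : R) : 0 < Rpower y c.
Proof. apply exp_pos. Qed.

Lemma locally_pos (x : R) : 0 < x -> locally x (fun t => 0 < t).
Proof. intros hx. apply (locally_interval _ x 0 p_infty); simpl; auto. Qed.

Lemma continuous_eps (f : R -> R) (x : R) : continuous f x <->
  (forall eps, 0 < eps -> exists d, 0 < d /\
     forall y, Rabs (y - x) < d -> Rabs (f y - f x) < eps).
Proof.
  split.
  - intros H eps he. apply filterlim_locally with (eps := mkposreal eps he) in H.
    destruct H as [d Hd]. exists d; split; [apply cond_pos|].
    intros y hy. exact (Hd y hy).
  - intros H. apply filterlim_locally. intros eps.
    destruct (H eps (cond_pos eps)) as [d [hd Hd]].
    exists (mkposreal d hd). intros y hy. exact (Hd y hy).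
Qed.

Lemma continuous_inv (f : R -> R) (x : R) : continuous f x -> f x <> 0 ->
  continuous (fun y => / f y) x.
Proof.
  intros H1 H2. apply continuity_pt_filterlim, continuity_pt_inv; auto.
  now apply continuity_pt_filterlim.
Qed.

Lemma continuous_div (f g : R -> R) (x : R) : continuous f x -> continuous g x ->
  g x <> 0 -> continuous (fun y => f y / g y) x.
Proof.
  intros H1 H2 H3. apply continuity_pt_filterlim, continuity_pt_div; auto;
  now apply continuity_pt_filterlim.
Qed.

Fixpoint Cn (n : nat) (f : R -> R) : Prop :=
  match n with
  | O => forall x, 0 < x -> continuous f x
  | S m => exists f', (forall x, 0 < x -> is_derive f x (f' x)) /\ Cn m f'
  end.

Definition Cinf (f : R -> R) : Prop := forall n, Cn n f.

Lemma Cn_cont n f : Cn n f -> forall x, 0 < x -> continuous f x.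
Proof.
  destruct n as [|n]; simpl; auto.
  intros [f' [H _]] x hx. exact (derive_continuous _ _ _ (H x hx)).
Qed.

Lemma Cn_ext n : forall f h, (forall x, 0 < x -> f x = h x) -> Cn n f -> Cn n h.
Proof.
  induction n as [|n IH]; simpl; intros f h E C.
  - intros x hx. apply (continuous_ext_loc h f x); auto.
    generalize (locally_pos x hx). apply filter_imp. intros; auto.
  - destruct C as [f' [D C]]. exists f'; split; auto.
    intros x hx. apply (is_derive_ext_loc f h x); auto.
    generalize (locally_pos x hx). apply filter_imp. auto.
Qed.

Lemma Cn_S n : forall f, Cn (S n) f -> Cn n f.
Proof.
  induction n as [|n IH]; intros f C.
  - exact (Cn_cont 1 f C).
  - destruct C as [f' [D C]]. exists f'; split; auto.
Qed.

Lemma Cn_plus n : forall f h, Cn n f -> Cn n h -> Cn n (fun x => f x + h x).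
Proof.
  induction n as [|n IH]; simpl; intros f h C1 C2.
  - intros x hx. apply continuous_Rplus; auto.
  - destruct C1 as [f' [D1 C1]], C2 as [h' [D2 C2]].
    exists (fun x => f' x + h' x); split; auto.
    intros x hx; apply derive_plus; auto.
Qed.

Lemma Cn_mult n : forall f h, Cn n f -> Cn n h -> Cn n (fun x => f x * h x).
Proof.
  induction n as [|n IH]; intros f h C1 C2.
  - intros x hx. apply continuous_Rmult; apply (Cn_cont 0); auto.
  - pose proof (Cn_S _ _ C1) as C1'. pose proof (Cn_S _ _ C2) as C2'.
    destruct C1 as [f' [D1 C1]], C2 as [h' [D2 C2]].
    exists (fun x => f' x * h x + f x * h' x); split.
    + intros x hx; apply derive_mult; auto.
    + apply Cn_plus; apply IH; auto.
Qed.

Lemma Cn_const n : forall c, Cn n (fun _ => c).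
Proof.
  induction n as [|n IH]; simpl; intros c.
  - intros; apply continuous_const.
  - exists (fun _ => 0); split; auto. intros x _; apply derive_const.
Qed.

Lemma Cn_id n : Cn n (fun x => x).
Proof.
  destruct n as [|n]; simpl.
  - intros; apply continuous_id.
  - exists (fun _ => 1); split; [intros x _; apply derive_id | apply Cn_const].
Qed.

Lemma Cn_inv n : forall f, (forall x, 0 < x -> f x <> 0) -> Cn n f ->
  Cn n (fun x => / f x).
Proof.
  induction n as [|n IH]; intros f Hf C.
  - intros x hx. apply continuous_inv; auto.
  - pose proof (Cn_S _ _ C) as C'. destruct C as [f' [D C]].
    exists (fun x => (-1 * f' x) * (/ f x * / f x)); split.
    + intros x hx. eapply derive_eq; [|apply is_derive_inv; auto].
      field. auto.
    + apply Cn_mult; [apply Cn_mult; auto; apply Cn_const|].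
      apply Cn_mult; apply IH; auto.
Qed.

Lemma Cn_rpow n : forall q, Cn n (fun x => Rpower x q).
Proof.
  induction n as [|n IH]; intros q.
  - intros x hx. exact (derive_continuous _ _ _ (derive_rpow q x hx)).
  - exists (fun x => q * Rpower x (q - 1)); split.
    + intros x hx. apply derive_rpow, hx.
    + apply Cn_mult; [apply Cn_const | apply IH].
Qed.

Lemma Cn_comp n : forall Q h, (forall x, 0 < x -> 0 < h x) -> Cn n Q -> Cn n h ->
  Cn n (fun x => Q (h x)).
Proof.
  induction n as [|n IH]; intros Q h Hh C1 C2.
  - intros x hx. apply continuous_comp; apply (Cn_cont 0); auto.
  - pose proof (Cn_S _ _ C2) as C2'.
    destruct C1 as [Q' [D1 C1]], C2 as [h' [D2 C2]].
    exists (fun x => h' x * Q' (h x)); split.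
    + intros x hx. apply derive_comp; auto.
    + apply Cn_mult; auto.
Qed.

Lemma Cinf_Derive f : Cinf f ->
  (forall x, 0 < x -> is_derive f x (Derive f x)) /\ Cinf (Derive f).
Proof.
  intros C. split.
  - intros x hx. destruct (C 1%nat) as [f' [D _]].
    rewrite (is_derive_unique f x (f' x)); auto.
  - intros n. destruct (C (S n)) as [f' [D Cf]].
    apply (Cn_ext n f'); auto. intros x hx. symmetry; apply is_derive_unique; auto.
Qed.

Lemma ex_RInt_cont (G : R -> R) a b : (forall y, continuous G y) -> ex_RInt G a b.
Proof. intros HG. apply (@ex_RInt_continuous R_CompleteNormedModule). auto. Qed.

Lemma derive_RInt_cont (G : R -> R) (x : R) : (forall y, continuous G y) ->
  is_derive (fun s => RInt G 0 s) x (G x).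
Proof.
  intros HG. apply (is_derive_RInt G (fun s => RInt G 0 s) 0 x); auto.
  apply filter_forall. intros b. apply (@RInt_correct R_CompleteNormedModule).
  now apply ex_RInt_cont.
Qed.

Lemma RInt_Rminus (f g : R -> R) a b : ex_RInt f a b -> ex_RInt g a b ->
  RInt (fun x => f x - g x) a b = RInt f a b - RInt g a b.
Proof. exact (RInt_minus f g a b). Qed.

Lemma RInt_monomial (C : R) (n : nat) (s : R) :
  RInt (fun r => C * r ^ n / INR (Factorial.fact n)) 0 s = C * s ^ S n / INR (Factorial.fact (S n)).
Proof.
  assert (Hn : INR (Factorial.fact n) <> 0) by apply INR_fact_neq_0.
  assert (HSn : INR (Factorial.fact (S n)) <> 0) by apply INR_fact_neq_0.
  apply is_RInt_unique.
  replace (C * s ^ S n / INR (Factorial.fact (S n))) with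
    (minus (C * s ^ S n / INR (Factorial.fact (S n))) (C * 0 ^ S n / INR (Factorial.fact (S n))))
    by (unfold minus, plus, opp; simpl; field; auto).
  apply (is_RInt_derive (fun r => C * r ^ S n / INR (Factorial.fact (S n)))).
  - intros x _.
    apply (is_derive_ext (fun r => C / INR (Factorial.fact (S n)) * r ^ S n));
      [intros t; simpl; field; auto|].
    eapply derive_eq; [|apply is_derive_scal, is_derive_Reals, derivable_pt_lim_pow].
    rewrite fact_simpl, mult_INR. simpl pred. field. split; auto.
    apply not_0_INR. lia.
  - intros x _. apply continuity_pt_filterlim. reg.
Qed.

Lemma Rmax0_lip (x y : R) : Rabs (Rmax y 0 - Rmax x 0) <= Rabs (y - x).
Proof.
  unfold Rmax; destruct (Rle_dec y 0), (Rle_dec x 0); unfold Rabs;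
  repeat destruct Rcase_abs; lra.
Qed.

Lemma continuous_Rmax0 (x : R) : continuous (fun y => Rmax y 0) x.
Proof.
  apply continuous_eps. intros eps he. exists eps; split; auto.
  intros y hy. eapply Rle_lt_trans; [apply Rmax0_lip | exact hy].
Qed.

(** Partial sums of the exponential series: they increase to [exp x] for
    [x >= 0]; their tails control the Picard iteration below. *)
Definition exp_psum (x : R) (n : nat) : R := sum_f_R0 (fun j => / INR (Factorial.fact j) * x ^ j) n.

Lemma exp_term_nonneg (x : R) (j : nat) : 0 <= x -> 0 <= / INR (Factorial.fact j) * x ^ j.
Proof.
  intros hx. apply Rmult_le_pos; [|now apply pow_le].
  left; apply Rinv_0_lt_compat, INR_fact_lt_0.
Qed.

Lemma exp_psum_le_exp (x : R) (n : nat) : 0 <= x -> exp_psum x n <= exp x.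
Proof.
  intros hx. apply growing_ineq.
  - intros m. unfold exp_psum. rewrite tech5. generalize (exp_term_nonneg x (S m) hx); lra.
  - unfold exp_psum, exp. destruct (exist_exp x) as [l H]. exact H.
Qed.

Lemma exp_psum_tail_small (x eps : R) : 0 < eps ->
  exists N, forall n, (N <= n)%nat -> exp x - exp_psum x n < eps.
Proof.
  intros he. unfold exp_psum, exp. destruct (exist_exp x) as [l H]; simpl.
  destruct (H eps he) as [N HN]. exists N. intros n hn.
  specialize (HN n hn). unfold Rdist in HN. apply Rabs_def2 in HN. lra.
Qed.

Section Picard.

Variable F : R -> R -> R.
Variables K L : R.
Hypothesis F_range : forall s y, 0 <= F s y <= K.
Hypothesis F_lip : forall s y z, Rabs (F s y - F s z) <= L * Rabs (y - z).
Hypothesis F_cont : forall f x, continuous f x -> continuous (fun r => F r (f r)) x.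
Hypothesis L_pos : 0 < L.

Let K_nonneg : 0 <= K.
Proof. destruct (F_range 0 0); lra. Qed.

Fixpoint picard_iter (n : nat) (s : R) : R :=
  match n with
  | O => 1
  | S m => 1 + RInt (fun r => F r (picard_iter m r)) 0 s
  end.

Lemma picard_iter_cont n x : continuous (picard_iter n) x.
Proof.
  revert x. induction n as [|n IH]; intros x; simpl.
  - apply continuous_const.
  - apply (derive_continuous _ _ (0 + F x (picard_iter n x))).
    apply derive_plus; [apply derive_const|].
    apply (derive_RInt_cont (fun r => F r (picard_iter n r))).
    intros y. apply (F_cont (picard_iter n)), IH.
Qed.

Lemma picard_integrand_cont n y : continuous (fun r => F r (picard_iter n r)) y.
Proof. apply (F_cont (picard_iter n)), picard_iter_cont. Qed.

Lemma picard_iter_at_0 n : picard_iter n 0 = 1.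
Proof. destruct n; simpl; auto. rewrite RInt_point. apply Rplus_0_r. Qed.

Lemma picard_step n s : 0 <= s ->
  Rabs (picard_iter (S n) s - picard_iter n s) <= K * L ^ n * s ^ S n / INR (Factorial.fact (S n)).
Proof.
  revert s. induction n as [|n IH]; intros s hs.
  - simpl picard_iter. rewrite Rplus_minus_l.
    eapply Rle_trans.
    + apply abs_RInt_le_const with (M := K); auto.
      * apply ex_RInt_cont. intros; apply (F_cont (fun _ => 1)), continuous_const.
      * intros t _. rewrite Rabs_right; [apply F_range | apply Rle_ge, F_range].
    + simpl. lra.
  - change (picard_iter (S (S n)) s - picard_iter (S n) s) with
      (1 + RInt (fun r => F r (picard_iter (S n) r)) 0 s
       - (1 + RInt (fun r => F r (picard_iter n r)) 0 s)).
    rewrite <- (RInt_monomial (K * L ^ S n)).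
    rewrite Rminus_plus_l_l, <- RInt_Rminus by (apply ex_RInt_cont, picard_integrand_cont).
    eapply Rle_trans; [apply abs_RInt_le; auto|].
    { apply ex_RInt_cont. intros; apply continuous_Rminus; apply picard_integrand_cont. }
    apply RInt_le; auto.
    + apply ex_RInt_cont. intros; apply continuous_comp.
      * apply continuous_Rminus; apply picard_integrand_cont.
      * apply continuity_pt_filterlim, Rcontinuity_abs.
    + apply ex_RInt_cont. intros y. apply continuity_pt_filterlim. reg.
    + intros r hr. eapply Rle_trans; [apply F_lip|].
      replace (K * L ^ S n * r ^ S n / INR (Factorial.fact (S n)))
        with (L * (K * L ^ n * r ^ S n / INR (Factorial.fact (S n))))
        by (change (L ^ S n) with (L * L ^ n); unfold Rdiv; ring).
      apply Rmult_le_compat_l; [lra | apply IH; lra].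
Qed.

Definition picard_tail (Sb : R) (n : nat) : R := K / L * (exp (L * Sb) - exp_psum (L * Sb) n).

Lemma picard_tail_nonneg Sb n : 0 <= Sb -> 0 <= picard_tail Sb n.
Proof.
  intros hS. unfold picard_tail. apply Rmult_le_pos.
  - apply Rdiv_le_0_compat; lra.
  - generalize (exp_psum_le_exp (L * Sb) n ltac:(nra)). lra.
Qed.

Lemma picard_tail_small Sb eps : 0 <= Sb -> 0 < eps ->
  exists N, forall n, (N <= n)%nat -> picard_tail Sb n < eps.
Proof.
  intros hS he. assert (KL : 0 <= K / L) by (apply Rdiv_le_0_compat; lra).
  destruct (exp_psum_tail_small (L * Sb) (eps / (K / L + 1))) as [N HN].
  { apply Rdiv_lt_0_compat; lra. }
  exists N. intros n hn. specialize (HN n hn). unfold picard_tail.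
  generalize (exp_psum_le_exp (L * Sb) n ltac:(nra)); intros.
  apply Rle_lt_trans with ((K / L + 1) * (exp (L * Sb) - exp_psum (L * Sb) n)).
  - apply Rmult_le_compat_r; lra.
  - apply Rmult_lt_compat_l with (r := K / L + 1) in HN; [|lra].
    replace ((K / L + 1) * (eps / (K / L + 1))) with eps in HN by (field; lra). lra.
Qed.

Lemma picard_tail_S Sb n : 0 <= Sb -> picard_tail Sb (S n) <= picard_tail Sb n.
Proof.
  intros hS. unfold picard_tail, exp_psum. rewrite tech5.
  apply Rmult_le_compat_l; [apply Rdiv_le_0_compat; lra|].
  generalize (exp_term_nonneg (L * Sb) (S n) ltac:(nra)). lra.
Qed.

(** Telescoping the step estimate: the iterates are uniformly Cauchy on [0, Sb]. *)
Lemma picard_cauchy Sb s n m : 0 <= s <= Sb -> (n <= m)%nat ->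
  Rabs (picard_iter m s - picard_iter n s) <= picard_tail Sb n.
Proof.
  intros hs hnm. replace m with (n + (m - n))%nat by lia.
  assert (Tel : forall d, Rabs (picard_iter (n + d) s - picard_iter n s)
            <= K / L * (exp_psum (L * Sb) (n + d) - exp_psum (L * Sb) n)).
  { induction d as [|d IH].
    - rewrite Nat.add_0_r. unfold Rminus. rewrite !Rplus_opp_r, Rabs_R0. lra.
    - rewrite Nat.add_succ_r. unfold exp_psum at 1. rewrite tech5. fold (exp_psum (L * Sb) (n + d)).
      replace (picard_iter (S (n + d)) s - picard_iter n s) with
        ((picard_iter (S (n + d)) s - picard_iter (n + d) s)
         + (picard_iter (n + d) s - picard_iter n s)) by ring.
      eapply Rle_trans; [apply Rabs_triang|].
      assert (Hstep : Rabs (picard_iter (S (n + d)) s - picard_iter (n + d) s)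
                      <= K / L * (/ INR (Factorial.fact (S (n + d))) * (L * Sb) ^ S (n + d))).
      { eapply Rle_trans; [apply picard_step; lra|].
        rewrite Rpow_mult_distr.
        replace (K / L * (/ INR (Factorial.fact (S (n + d))) * (L ^ S (n + d) * Sb ^ S (n + d))))
          with (K * L ^ (n + d) * Sb ^ S (n + d) / INR (Factorial.fact (S (n + d))))
          by (change (L ^ S (n + d)) with (L * L ^ (n + d)); field;
              split; [apply INR_fact_neq_0 | lra]).
        apply Rmult_le_compat_r; [left; apply Rinv_0_lt_compat, INR_fact_lt_0|].
        apply Rmult_le_compat_l; [apply Rmult_le_pos; auto; apply pow_le; lra|].
        apply pow_incr; lra. }
      lra. }
  eapply Rle_trans; [apply Tel|]. unfold picard_tail.
  apply Rmult_le_compat_l; [apply Rdiv_le_0_compat; lra|].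
  generalize (exp_psum_le_exp (L * Sb) (n + (m - n)) ltac:(nra)). lra.
Qed.

(** The limit of the iterates, extended by [1] on the negative half-line. *)
Definition picard_lim (s : R) : R := real (Lim_seq (fun n => picard_iter n (Rmax s 0))).

Lemma picard_lim_approx Sb s n : 0 <= Sb -> s <= Sb ->
  Rabs (picard_lim s - picard_iter n (Rmax s 0)) <= picard_tail Sb n.
Proof.
  intros hS hs. set (s' := Rmax s 0).
  assert (hs' : 0 <= s' <= Sb) by (unfold s'; split; [apply Rmax_r | apply Rmax_lub; lra]).
  assert (Hc : ex_finite_lim_seq (fun n => picard_iter n s')).
  { apply ex_lim_seq_cauchy_corr. intros eps.
    destruct (picard_tail_small Sb (eps / 2)) as [N HN]; auto.
    { generalize (cond_pos eps); lra. }
    exists N. intros k m hk hm.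
    replace (picard_iter k s' - picard_iter m s') with
      ((picard_iter k s' - picard_iter N s') - (picard_iter m s' - picard_iter N s')) by ring.
    eapply Rle_lt_trans; [apply Rabs_triang|]. rewrite Rabs_Ropp.
    generalize (picard_cauchy Sb s' N k hs' hk) (picard_cauchy Sb s' N m hs' hm)
      (HN N (Nat.le_refl _)). lra. }
  destruct Hc as [l Hl]. unfold picard_lim. fold s'.
  rewrite (is_lim_seq_unique _ _ Hl). simpl.
  apply (is_lim_seq_incr_n _ n) in Hl.
  apply (is_lim_seq_le (fun m => Rabs (picard_iter (m + n) s' - picard_iter n s'))
           (fun _ => picard_tail Sb n) (Rabs (l - picard_iter n s')) (picard_tail Sb n)).
  - intros m. apply picard_cauchy; auto; lia.
  - apply (is_lim_seq_abs _ (l - picard_iter n s')).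
    apply (is_lim_seq_minus' _ _ _ _ Hl (is_lim_seq_const _)).
  - apply is_lim_seq_const.
Qed.

Lemma picard_lim_nonpos s : s <= 0 -> picard_lim s = 1.
Proof.
  intros hs. unfold picard_lim. rewrite Rmax_right by lra.
  rewrite (Lim_seq_ext _ (fun _ => 1)) by (intros; apply picard_iter_at_0).
  rewrite Lim_seq_const. reflexivity.
Qed.

(** The iterates converge uniformly on bounded sets, so the limit is continuous. *)
Lemma picard_lim_cont x : continuous picard_lim x.
Proof.
  apply continuity_pt_filterlim.
  assert (Hx : Boule x (mkposreal 1 Rlt_0_1) x) by (unfold Boule; rewrite Rminus_diag, Rabs_R0; simpl; lra).
  apply (CVU_continuity (fun n y => picard_iter n (Rmax y 0)) picard_lim x (mkposreal 1 Rlt_0_1)); auto.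
  - intros eps he. set (Sb := Rmax x 0 + 1).
    assert (hS : 0 <= Sb) by (unfold Sb; generalize (Rmax_r x 0); lra).
    destruct (picard_tail_small Sb eps hS he) as [N HN]. exists N.
    intros n y hn hy. unfold Boule in hy; simpl in hy. apply Rabs_def2 in hy.
    eapply Rle_lt_trans; [apply (picard_lim_approx Sb)|]; auto.
    unfold Sb; generalize (Rmax_l x 0); lra.
  - intros n y _. apply continuity_pt_filterlim.
    apply (continuous_comp (fun y => Rmax y 0) (picard_iter n));
      [apply continuous_Rmax0 | apply picard_iter_cont].
Qed.

Lemma picard_lim_integrand_cont y : continuous (fun r => F r (picard_lim r)) y.
Proof. apply (F_cont picard_lim), picard_lim_cont. Qed.

(** The limit solves the integral equation: passing to the limit in
    [P_(N+1) = 1 + int_0^s F(r, P_N r) dr] costs at most [(1 + L s)] times the tail. *)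
Lemma picard_lim_fixpoint s : 0 <= s ->
  picard_lim s = 1 + RInt (fun r => F r (picard_lim r)) 0 s.
Proof.
  intros hs. apply Rminus_diag_uniq.
  destruct (Req_dec (picard_lim s - (1 + RInt (fun r => F r (picard_lim r)) 0 s)) 0)
    as [E|E]; auto. exfalso.
  set (eps := Rabs (picard_lim s - (1 + RInt (fun r => F r (picard_lim r)) 0 s))).
  assert (he : 0 < eps) by (apply Rabs_pos_lt, E).
  assert (c0 : 0 < 1 + s * L) by nra.
  destruct (picard_tail_small s (eps / (1 + s * L))) as [N HN]; auto.
  { apply Rdiv_lt_0_compat; lra. }
  assert (A1 := picard_lim_approx s s (S N) hs (Rle_refl _)).
  rewrite Rmax_left in A1 by exact hs.
  assert (A2 : Rabs (RInt (fun r => F r (picard_lim r)) 0 s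
                     - RInt (fun r => F r (picard_iter N r)) 0 s) <= s * (L * picard_tail s N)).
  { rewrite <- RInt_Rminus by (apply ex_RInt_cont;
      first [apply picard_lim_integrand_cont | apply picard_integrand_cont]).
    replace s with (s - 0) at 2 by ring.
    apply abs_RInt_le_const; auto.
    { apply ex_RInt_cont. intros; apply continuous_Rminus;
        [apply picard_lim_integrand_cont | apply picard_integrand_cont]. }
    intros t ht. eapply Rle_trans; [apply F_lip|]. apply Rmult_le_compat_l; [lra|].
    generalize (picard_lim_approx s t N hs (proj2 ht)). rewrite Rmax_left by lra. auto. }
  assert (A3 := picard_tail_S s N hs).
  assert (A4 := HN N (Nat.le_refl _)).
  assert (A5 := picard_tail_nonneg s N hs).
  simpl in A1.
  set (I := RInt (fun r => F r (picard_lim r)) 0 s) in *.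
  set (J := RInt (fun r => F r (picard_iter N r)) 0 s) in *.
  assert (Hsplit : eps <= Rabs (picard_lim s - (1 + J)) + Rabs (I - J)).
  { unfold eps. rewrite <- (Rabs_Ropp (I - J)).
    replace (picard_lim s - (1 + I)) with (picard_lim s - (1 + J) + - (I - J)) by ring.
    apply Rabs_triang. }
  apply Rmult_lt_compat_l with (r := 1 + s * L) in A4; auto.
  replace ((1 + s * L) * (eps / (1 + s * L))) with eps in A4 by (field; lra).
  nra.
Qed.

End Picard.

(** Writing the solution as [u = y^a g(x + beta ln y)],
    the equation [det D^2 u = u^p] becomes an autonomous second-order ODE for [g];
    in the unknown [P = g' o g^-1] it is the first-order equation
    [P' = profile_rhs s P] solved below, starting from [P 0 = 1]. *)

Definition profile_rhs (a A B p s y : R) : R :=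
  (a * a * (y * y) + Rpower s p) / (y * (A * s + B * y)).

Definition pos_pow (p r : R) : R := if Rle_dec r 0 then 0 else Rpower r p.

Lemma pos_pow_pos p r : 0 < r -> pos_pow p r = Rpower r p.
Proof. intros h; unfold pos_pow; destruct (Rle_dec r 0); auto; lra. Qed.

Lemma pos_pow_range p r : 0 < p < 1 -> 0 <= r -> 0 <= pos_pow p r <= 1 + r.
Proof.
  intros hp hr. unfold pos_pow. destruct (Rle_dec r 0); [lra|].
  assert (0 < Rpower r p) by apply Rpower_pos. split; [lra|].
  destruct (Rle_lt_dec r 1).
  - assert (Rpower r p <= Rpower 1 p) by (apply Rle_Rpower_l; lra).
    replace (Rpower 1 p) with 1 in H0 by (unfold Rpower; rewrite ln_1, Rmult_0_r, exp_0; auto).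
    lra.
  - assert (Rpower r p <= Rpower r 1) by (apply Rle_Rpower; lra).
    rewrite Rpower_1 in H0; lra.
Qed.

(** [r |-> pos_pow p (max r 0)] is continuous: it vanishes on the left, is a
    power on the right, and at 0 the power tends to 0 since [p > 0]. *)
Lemma pos_pow_cont p x : 0 < p -> continuous (fun s => pos_pow p (Rmax s 0)) x.
Proof.
  intros hp. destruct (Rtotal_order x 0) as [hx | [hx | hx]].
  - apply (continuous_ext_loc _ (fun _ => 0)); [|apply continuous_const].
    apply (locally_interval _ x m_infty 0); simpl; auto. intros y _ hy.
    unfold pos_pow. rewrite Rmax_right by lra. destruct (Rle_dec 0 0); auto; lra.
  - subst. apply continuous_eps. intros eps he.
    exists (Rpower eps (/ p)). split; [apply Rpower_pos|].
    intros y hy. rewrite (Rmax_left 0 0) by lra.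
    replace (pos_pow p 0) with 0 by (unfold pos_pow; destruct (Rle_dec 0 0); lra).
    rewrite Rminus_0_r in *. unfold pos_pow. destruct (Rle_dec (Rmax y 0) 0).
    { rewrite Rabs_R0; auto. }
    assert (Rmax y 0 <= Rabs y) by (unfold Rmax, Rabs; destruct Rle_dec; destruct Rcase_abs; lra).
    rewrite Rabs_right by (left; apply Rpower_pos).
    replace eps with (Rpower (Rpower eps (/ p)) p)
      by (rewrite Rpower_mult, Rinv_l by lra; apply Rpower_1; auto).
    apply Rlt_Rpower_l; auto. lra.
  - apply (continuous_ext_loc _ (fun s => Rpower s p)).
    + apply (locally_interval _ x 0 p_infty); simpl; auto. intros y hy _.
      rewrite Rmax_left by lra. rewrite pos_pow_pos; auto.
    + exact (derive_continuous _ _ _ (derive_rpow p x hx)).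
Qed.

(** The right-hand side made globally bounded and Lipschitz, by freezing [s]
    below 0 and [y] below 1; it agrees with [profile_rhs] where [s > 0], [y >= 1]. *)
Definition trunc_rhs (a A B p s y : R) : R :=
  (a * a * (Rmax y 1 * Rmax y 1) + pos_pow p (Rmax s 0))
  / (Rmax y 1 * (A * Rmax s 0 + B * Rmax y 1)).

Lemma trunc_rhs_agrees a A B p s y : 0 < s -> 1 <= y ->
  trunc_rhs a A B p s y = profile_rhs a A B p s y.
Proof.
  intros hs hy. unfold trunc_rhs, profile_rhs.
  rewrite (Rmax_left y), (Rmax_left s), pos_pow_pos by lra. reflexivity.
Qed.

Lemma Rmax1_lip (y z : R) : Rabs (Rmax y 1 - Rmax z 1) <= Rabs (y - z).
Proof.
  unfold Rmax; destruct (Rle_dec y 1), (Rle_dec z 1); unfold Rabs;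
  repeat destruct Rcase_abs; lra.
Qed.

Lemma continuous_Rmax1 (f : R -> R) (x : R) : continuous f x ->
  continuous (fun y => Rmax (f y) 1) x.
Proof.
  intros H. apply (continuous_comp f (fun z => Rmax z 1)); auto.
  apply continuous_eps. intros eps he. exists eps; split; auto.
  intros y hy. eapply Rle_lt_trans; [apply Rmax1_lip | exact hy].
Qed.

Section TruncatedRhs.

Variables a A B p : R.
Hypothesis A_pos : 0 < A.
Hypothesis B_pos : 0 < B.
Hypothesis p_range : 0 < p < 1.

Lemma trunc_rhs_cont f x : continuous f x ->
  continuous (fun r => trunc_rhs a A B p r (f r)) x.
Proof.
  intros Hf. unfold trunc_rhs.
  assert (C1 : continuous (fun y => Rmax (f y) 1) x) by (apply continuous_Rmax1; auto).
  assert (C2 := continuous_Rmax0 x).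
  assert (1 <= Rmax (f x) 1) by apply Rmax_r. assert (0 <= Rmax x 0) by apply Rmax_r.
  apply continuous_div.
  - apply continuous_Rplus; [|apply pos_pow_cont; lra].
    apply continuous_Rmult; [apply continuous_const | apply continuous_Rmult; auto].
  - apply continuous_Rmult; auto.
    apply continuous_Rplus; apply continuous_Rmult; auto; apply continuous_const.
  - apply Rgt_not_eq. apply Rmult_lt_0_compat; nra.
Qed.

Definition trunc_bound : R := a * a / B + (/ A + / B).

Lemma trunc_rhs_range s y : 0 <= trunc_rhs a A B p s y <= trunc_bound.
Proof.
  unfold trunc_rhs, trunc_bound.
  set (q := Rmax y 1). set (r := Rmax s 0). set (w := pos_pow p r).
  assert (hq : 1 <= q) by apply Rmax_r. assert (hr : 0 <= r) by apply Rmax_r.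
  assert (hw := pos_pow_range p r p_range hr). fold w in hw.
  assert (hD : 0 < A * r + B * q) by nra.
  replace ((a * a * (q * q) + w) / (q * (A * r + B * q))) with
    (a * a * q / (A * r + B * q) + w / q / (A * r + B * q)) by (field; lra).
  assert (T1 : 0 <= a * a * q / (A * r + B * q) <= a * a / B).
  { split; [apply Rdiv_le_0_compat; nra|].
    apply Rmult_le_reg_r with (A * r + B * q); auto. unfold Rdiv.
    rewrite Rmult_assoc, Rinv_l by lra. apply Rmult_le_reg_r with B; auto.
    replace (a * a * / B * (A * r + B * q) * B) with (a * a * (A * r + B * q)) by (field; lra).
    assert (0 <= a * a) by nra. assert (0 <= a * a * (A * r)) by (apply Rmult_le_pos; nra).
    nra. }
  assert (T2 : 0 <= w / q / (A * r + B * q) <= / A + / B).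
  { split; [apply Rdiv_le_0_compat; [apply Rdiv_le_0_compat|]; lra|].
    apply Rmult_le_reg_r with (A * r + B * q); auto. unfold Rdiv.
    rewrite Rmult_assoc, Rinv_l, Rmult_1_r by lra.
    assert (w * / q <= w)
      by (apply Rmult_le_reg_r with q; [lra|]; rewrite Rmult_assoc, Rinv_l by lra; nra).
    replace ((/ A + / B) * (A * r + B * q)) with (r + B * q / A + A * r / B + q) by (field; lra).
    assert (0 <= B * q / A) by (apply Rdiv_le_0_compat; nra).
    assert (0 <= A * r / B) by (apply Rdiv_le_0_compat; nra). lra. }
  lra.
Qed.

Definition trunc_lip : R := a * a / B + 2 * (/ A + / B).

(** The Lipschitz estimate rests on the factorisation
    [h(q) - h(q') = (q - q') (X - Y)] of the difference of the values at the
    truncated arguments [q, q' >= 1]; the next two lemmas bound [X] and [Y]. *)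
Lemma lip_coef_X r q q' : 0 <= r -> 1 <= q -> 1 <= q' ->
  0 <= a * a * (A * r) / ((A * r + B * q) * (A * r + B * q')) <= a * a / B.
Proof.
  intros hr hq hq'.
  assert (hAr : 0 <= A * r) by nra.
  assert (hD1 : A * r + B <= A * r + B * q) by nra.
  assert (hD2 : A * r + B <= A * r + B * q') by nra.
  assert (hDD : 0 < (A * r + B * q) * (A * r + B * q')) by (apply Rmult_lt_0_compat; lra).
  assert (0 <= a * a) by nra. split; [apply Rdiv_le_0_compat; nra|].
  apply Rmult_le_reg_r with ((A * r + B * q) * (A * r + B * q')); auto. unfold Rdiv.
  rewrite Rmult_assoc, Rinv_l, Rmult_1_r by lra.
  apply Rmult_le_reg_r with B; auto.
  replace (a * a * / B * ((A * r + B * q) * (A * r + B * q')) * B)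
    with (a * a * ((A * r + B * q) * (A * r + B * q'))) by (field; lra).
  assert (B * (A * r) <= (A * r + B * q) * (A * r + B * q')) by nra. nra.
Qed.

Lemma lip_coef_Y w r q q' : 0 <= r -> 1 <= q -> 1 <= q' -> 0 <= w <= 1 + r ->
  0 <= w * (A * r + B * q + B * q') / (q * q' * ((A * r + B * q) * (A * r + B * q')))
    <= 2 * (/ A + / B).
Proof.
  intros hr hq hq' hw.
  set (D1 := A * r + B * q). set (D2 := A * r + B * q'). set (M := / A + / B).
  assert (hAr : 0 <= A * r) by nra.
  assert (hD1 : A * r + B <= D1) by (unfold D1; nra).
  assert (hD2 : A * r + B <= D2) by (unfold D2; nra).
  assert (hqq : 0 < q * q' * (D1 * D2)) by (apply Rmult_lt_0_compat; nra).
  assert (hM0 : 0 < M) by (unfold M; assert (0 < / A) by (apply Rinv_0_lt_compat; lra);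
                           assert (0 < / B) by (apply Rinv_0_lt_compat; lra); lra).
  assert (hM : w <= M * (A * r + B)).
  { unfold M. replace ((/ A + / B) * (A * r + B)) with (r + B / A + A * r / B + 1) by (field; lra).
    assert (0 <= B / A) by (apply Rdiv_le_0_compat; lra).
    assert (0 <= A * r / B) by (apply Rdiv_le_0_compat; nra). lra. }
  split; [apply Rdiv_le_0_compat; [apply Rmult_le_pos; nra | exact hqq]|].
  apply Rmult_le_reg_r with (q * q' * (D1 * D2)); auto. unfold Rdiv.
  rewrite Rmult_assoc, Rinv_l, Rmult_1_r by lra.
  assert (w * D1 <= M * (D1 * D2)).
  { apply Rle_trans with (M * (A * r + B) * D1); [apply Rmult_le_compat_r; nra|].
    rewrite (Rmult_comm D1 D2), <- Rmult_assoc.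
    apply Rmult_le_compat_r; [nra | apply Rmult_le_compat_l; nra]. }
  assert (w * D2 <= M * (D1 * D2)).
  { apply Rle_trans with (M * (A * r + B) * D2); [apply Rmult_le_compat_r; nra|].
    rewrite <- Rmult_assoc. apply Rmult_le_compat_r; [nra | apply Rmult_le_compat_l; nra]. }
  assert (w * (D1 + B * q') <= w * (D1 + D2)) by (apply Rmult_le_compat_l; unfold D2; nra).
  assert (1 <= q * q') by nra.
  assert (0 <= M * (D1 * D2) * (q * q' - 1)) by (apply Rmult_le_pos; nra).
  nra.
Qed.

Lemma trunc_rhs_lip s y z :
  Rabs (trunc_rhs a A B p s y - trunc_rhs a A B p s z) <= trunc_lip * Rabs (y - z).
Proof.
  unfold trunc_rhs, trunc_lip.
  set (q := Rmax y 1). set (q' := Rmax z 1). set (r := Rmax s 0). set (w := pos_pow p r).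
  assert (hq : 1 <= q) by apply Rmax_r. assert (hq' : 1 <= q') by apply Rmax_r.
  assert (hr : 0 <= r) by apply Rmax_r.
  assert (hw := pos_pow_range p r p_range hr). fold w in hw.
  assert (hX := lip_coef_X r q q' hr hq hq').
  assert (hY := lip_coef_Y w r q q' hr hq hq' hw).
  set (X := a * a * (A * r) / ((A * r + B * q) * (A * r + B * q'))) in hX.
  set (Y := w * (A * r + B * q + B * q') / (q * q' * ((A * r + B * q) * (A * r + B * q')))) in hY.
  assert (E : (a * a * (q * q) + w) / (q * (A * r + B * q))
              - (a * a * (q' * q') + w) / (q' * (A * r + B * q')) = (q - q') * (X - Y)).
  { unfold X, Y. field. repeat split; nra. }
  rewrite E, Rabs_mult, Rmult_comm.
  apply Rmult_le_compat; [apply Rabs_pos | apply Rabs_pos | | apply Rmax1_lip].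
  unfold Rabs; destruct Rcase_abs; lra.
Qed.

Lemma trunc_lip_pos : 0 < trunc_lip.
Proof.
  unfold trunc_lip. assert (0 < / A) by (apply Rinv_0_lt_compat; lra).
  assert (0 < / B) by (apply Rinv_0_lt_compat; lra).
  assert (0 <= a * a / B) by (apply Rdiv_le_0_compat; nra). lra.
Qed.

Lemma profile_P_exists : exists P : R -> R,
  (forall s, continuous P s) /\ (forall s, s <= 0 -> P s = 1) /\
  (forall s, 1 <= P s) /\ (forall s, 0 <= s -> P s <= 1 + trunc_bound * s) /\
  (forall s, 0 < s -> is_derive P s (profile_rhs a A B p s (P s))).
Proof.
  set (F := trunc_rhs a A B p).
  assert (FC : forall f x, continuous f x -> continuous (fun r => F r (f r)) x)
    by (intros; apply trunc_rhs_cont; auto).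
  set (P := picard_lim F).
  assert (GC : forall y, continuous (fun r => F r (P r)) y)
    by (intros; apply (picard_lim_integrand_cont F trunc_bound trunc_lip);
        auto using trunc_rhs_range, trunc_rhs_lip, trunc_lip_pos).
  assert (Pfix : forall s, 0 <= s -> P s = 1 + RInt (fun r => F r (P r)) 0 s)
    by (intros; apply (picard_lim_fixpoint F trunc_bound trunc_lip);
        auto using trunc_rhs_range, trunc_rhs_lip, trunc_lip_pos).
  assert (Pint_range : forall s, 0 <= s -> 0 <= RInt (fun r => F r (P r)) 0 s <= trunc_bound * s).
  { intros s hs. split.
    - apply RInt_ge_0; auto; [apply ex_RInt_cont; auto|]. intros; apply trunc_rhs_range.
    - replace (trunc_bound * s) with ((s - 0) * trunc_bound) by ring.
      eapply Rle_trans; [apply Rle_abs|].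
      apply abs_RInt_le_const; auto; [apply ex_RInt_cont; auto|].
      intros t _. rewrite Rabs_right; apply trunc_rhs_range || apply Rle_ge, trunc_rhs_range. }
  exists P. split; [|split; [|split; [|split]]].
  - intros s. apply (picard_lim_cont F trunc_bound trunc_lip);
      auto using trunc_rhs_range, trunc_rhs_lip, trunc_lip_pos.
  - intros s hs. apply (picard_lim_nonpos F); auto.
  - intros s. destruct (Rle_lt_dec s 0) as [hs|hs].
    + rewrite (picard_lim_nonpos F s hs : P s = 1). lra.
    + rewrite Pfix by lra. generalize (Pint_range s ltac:(lra)). lra.
  - intros s hs. rewrite Pfix by lra. generalize (Pint_range s hs). lra.
  - intros s hs.
    assert (P1 : 1 <= P s).
    { rewrite Pfix by lra. generalize (Pint_range s ltac:(lra)). lra. }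
    rewrite <- trunc_rhs_agrees by lra.
    apply (is_derive_ext_loc (fun s => 1 + RInt (fun r => F r (P r)) 0 s)).
    + generalize (locally_pos s hs). apply filter_imp. intros x hx. rewrite Pfix; auto; lra.
    + eapply derive_eq;
        [|apply derive_plus; [apply derive_const | apply (derive_RInt_cont (fun r => F r (P r))); auto]].
      unfold F; ring.
Qed.

End TruncatedRhs.

Lemma strict_incr_of_derive (T dT : R -> R) :
  (forall x, is_derive T x (dT x)) -> (forall x, 0 < dT x) ->
  forall x y, x < y -> T x < T y.
Proof.
  intros D Pos x y hxy. destruct (MVT_gen T x y dT) as [c [hc E]].
  - intros; auto.
  - intros z _. apply continuity_pt_filterlim. exact (derive_continuous _ _ _ (D z)).
  - rewrite Rmin_left, Rmax_right in hc by lra. specialize (Pos c). nra.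
Qed.

Section TimeChange.

(** Solving [g' = P o g, g 0 = 0]: [g] is the inverse of the "time"
    [T s = int_0^s dr / P r].  [T] is a smooth increasing bijection of R,
    because [1 <= P] and [P] grows at most linearly (so [T s >= ln(1 + K s) / K]). *)

Variable P : R -> R.
Variable K : R.
Hypothesis P_cont : forall s, continuous P s.
Hypothesis P_nonpos : forall s, s <= 0 -> P s = 1.
Hypothesis P_ge1 : forall s, 1 <= P s.
Hypothesis P_growth : forall s, 0 <= s -> P s <= 1 + K * s.
Hypothesis K_pos : 0 < K.

Definition time (s : R) : R := RInt (fun r => / P r) 0 s.

Lemma inv_P_cont y : continuous (fun r => / P r) y.
Proof. apply continuous_inv; auto. generalize (P_ge1 y); lra. Qed.

Lemma time_derive s : is_derive time s (/ P s).
Proof. apply (derive_RInt_cont (fun r => / P r)), inv_P_cont. Qed.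

Lemma time_incr x y : x < y -> time x < time y.
Proof.
  apply (strict_incr_of_derive time (fun s => / P s)); [apply time_derive|].
  intros s. apply Rinv_0_lt_compat. generalize (P_ge1 s); lra.
Qed.

Lemma time_le x y : x <= y -> time x <= time y.
Proof. intros [h|<-]; [left; apply time_incr, h | lra]. Qed.

Lemma time_0 : time 0 = 0.
Proof. unfold time. rewrite RInt_point. reflexivity. Qed.

Lemma time_nonpos s : s <= 0 -> time s = s.
Proof.
  intros hs. unfold time. rewrite (RInt_ext _ (fun _ => 1)).
  - rewrite RInt_const. change (scal (s - 0) 1) with ((s - 0) * 1). ring.
  - intros x hx. rewrite Rmin_right, Rmax_left in hx by lra.
    rewrite P_nonpos by lra. apply Rinv_1.
Qed.

(** Comparison with [int_0^s dr / (1 + K r) = ln(1 + K s) / K]. *)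
Lemma time_lower s : 0 <= s -> ln (1 + K * s) / K <= time s.
Proof.
  intros hs.
  assert (C : forall x, 0 <= x -> continuous (fun r => / (1 + K * r)) x).
  { intros x hx. apply continuous_inv; [apply continuity_pt_filterlim; reg | nra]. }
  replace (ln (1 + K * s) / K) with (RInt (fun r => / (1 + K * r)) 0 s).
  - apply RInt_le; auto.
    + apply (@ex_RInt_continuous R_CompleteNormedModule). intros y hy.
      rewrite Rmin_left, Rmax_right in hy by lra. apply C; lra.
    + apply ex_RInt_cont, inv_P_cont.
    + intros x hx. apply Rinv_le_contravar; [generalize (P_ge1 x); lra | apply P_growth; lra].
  - apply is_RInt_unique.
    replace (ln (1 + K * s) / K) with (minus (ln (1 + K * s) / K) (ln (1 + K * 0) / K))
      by (unfold minus, plus, opp; simpl; rewrite Rmult_0_r, Rplus_0_r, ln_1; field; lra).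
    apply (is_RInt_derive (fun r => ln (1 + K * r) / K)).
    + intros x hx. rewrite Rmin_left in hx by lra. auto_derive; [nra | field; split; nra].
    + intros x hx. rewrite Rmin_left in hx by lra. apply C; lra.
Qed.

Lemma time_surj t : exists s, time s = t.
Proof.
  destruct (Rle_lt_dec t 0) as [ht|ht]; [exists t; apply time_nonpos, ht|].
  set (b := (exp (K * t) - 1) / K).
  assert (hb : 0 <= b).
  { unfold b. apply Rdiv_le_0_compat; auto.
    assert (1 <= exp (K * t)) by (rewrite <- exp_0; left; apply exp_increasing; nra). lra. }
  assert (Tb : t <= time b).
  { eapply Rle_trans; [|apply time_lower; auto]. unfold b.
    replace (1 + K * ((exp (K * t) - 1) / K)) with (exp (K * t)) by (field; lra).
    rewrite ln_exp. right; field; lra. }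
  destruct (IVT_gen time 0 b t) as [x [_ hx]].
  - intros x. apply continuity_pt_filterlim. exact (derive_continuous _ _ _ (time_derive x)).
  - rewrite time_0, Rmin_left, Rmax_right; lra.
  - exists x; auto.
Qed.

Definition time_inv (t : R) : R :=
  proj1_sig (constructive_indefinite_description _ (time_surj t)).

Lemma time_time_inv t : time (time_inv t) = t.
Proof. unfold time_inv. destruct constructive_indefinite_description; auto. Qed.

Lemma time_inv_time s : time_inv (time s) = s.
Proof.
  set (s' := time_inv (time s)). assert (E := time_time_inv (time s)). fold s' in E.
  destruct (Rtotal_order s' s) as [h|[h|h]]; auto; apply time_incr in h; lra.
Qed.

Lemma time_inv_le t1 t2 : t1 <= t2 -> time_inv t1 <= time_inv t2.
Proof.
  intros h. destruct (Rle_lt_dec (time_inv t1) (time_inv t2)) as [|h']; auto.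
  apply time_incr in h'. rewrite !time_time_inv in h'. lra.
Qed.

Lemma time_inv_0 : time_inv 0 = 0.
Proof. rewrite <- time_0 at 1. apply time_inv_time. Qed.

Lemma time_inv_pos t : 0 < t -> 0 < time_inv t.
Proof.
  intros ht. destruct (Rle_lt_dec (time_inv t) 0) as [h|h]; auto.
  apply time_le in h. rewrite time_time_inv, time_0 in h. lra.
Qed.

Lemma time_inv_cont t : continuity_pt time_inv t.
Proof.
  apply (Ranalysis5.continuity_pt_recip_interv time time_inv (time_inv t - 1) (time_inv t + 1)).
  - lra.
  - intros x y _ h _. apply time_incr; auto.
  - intros x _ _. apply time_time_inv.
  - intros x h1 h2. apply time_inv_le in h1. apply time_inv_le in h2.
    rewrite time_inv_time in h1, h2. lra.
  - intros x _. apply continuity_pt_filterlim. exact (derive_continuous _ _ _ (time_derive x)).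
  - split; [rewrite <- (time_time_inv t) at 2 | rewrite <- (time_time_inv t) at 1];
      apply time_incr; lra.
Qed.

(** Inverse function rule: [(T^-1)' = 1 / T'(T^-1) = P o T^-1]. *)
Lemma time_inv_derive t : is_derive time_inv t (P (time_inv t)).
Proof.
  set (dT := fun y => exist (fun l => derivable_pt_lim time y l) (/ P y)
                           (proj1 (is_derive_Reals time y (/ P y)) (time_derive y))).
  assert (hP := P_ge1 (time_inv t)).
  assert (Hg := Ranalysis5.derivable_pt_lim_recip_interv time time_inv (t - 1) (t + 1) t
     (fun a _ => dT a) (time_inv_cont t) ltac:(lra) ltac:(lra)
     (conj (time_inv_le (t - 1) t ltac:(lra)) (time_inv_le t (t + 1) ltac:(lra)))
     (fun x _ => time_time_inv x)).
  apply is_derive_Reals. simpl in Hg.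
  replace (P (time_inv t)) with (1 / / P (time_inv t)) by (field; lra).
  apply Hg. apply Rgt_not_eq, Rinv_0_lt_compat. lra.
Qed.

End TimeChange.

(** Smoothness: a solution of the profile equation is [C^oo] on (0, +oo),
    since its derivative is a smooth expression of [s] and of itself. *)
Lemma profile_P_smooth a A B p (P : R -> R) : 0 < A -> 0 < B ->
  (forall s, 1 <= P s) ->
  (forall s, 0 < s -> is_derive P s (profile_rhs a A B p s (P s))) ->
  Cinf P.
Proof.
  intros hA hB P1 PD n. induction n as [|n IH].
  - intros x hx. exact (derive_continuous _ _ _ (PD x hx)).
  - exists (fun s => profile_rhs a A B p s (P s)). split; auto. unfold profile_rhs.
    apply Cn_mult.
    + apply Cn_plus; [|apply Cn_rpow].
      apply Cn_mult; [apply Cn_const | apply Cn_mult; auto].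
    + apply Cn_inv.
      * intros x hx. generalize (P1 x); intros. apply Rgt_not_eq, Rmult_lt_0_compat; nra.
      * apply Cn_mult; auto. apply Cn_plus; apply Cn_mult; auto; try apply Cn_const.
        apply Cn_id.
Qed.

Lemma Cinf_autonomous (P g : R -> R) : Cinf P -> (forall t, 0 < t -> 0 < g t) ->
  (forall t, is_derive g t (P (g t))) -> Cinf g.
Proof.
  intros CP gpos gd n. induction n as [|n IH].
  - intros x hx. exact (derive_continuous _ _ _ (gd x)).
  - exists (fun t => P (g t)). split; auto. apply Cn_comp; auto.
Qed.

Definition profile_solution (a beta p : R) (g g1 g2 : R -> R) : Prop :=
  forall t, 0 < t ->
    0 < g t /\ is_derive g t (g1 t) /\ is_derive g1 t (g2 t) /\ 0 < g2 t /\
    g2 t * (a * (a - 1) * g t - beta * g1 t) - a * a * (g1 t * g1 t) = Rpower (g t) p.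

(** The profile: [g = T^-1] with [T' = 1/P], so [g' = P o g] and
    [g'' = (P' o g) (P o g)]; the equation for [P] is the profile ODE for [g]. *)
Theorem profile_exists (a beta p : R) : 1 < a -> beta < 0 -> 0 < p < 1 ->
  exists g g1 g2 : R -> R,
    Cinf g /\ g 0 = 0 /\ continuous g 0 /\ profile_solution a beta p g g1 g2.
Proof.
  intros ha hbeta hp.
  assert (hA : 0 < a * (a - 1)) by nra.
  destruct (profile_P_exists a (a * (a - 1)) (- beta) p hA ltac:(lra) hp)
    as [P [Pc [P0 [P1 [Pg Pd]]]]].
  set (K := trunc_bound a (a * (a - 1)) (- beta)) in Pg.
  assert (hK : 0 < K).
  { unfold K, trunc_bound. assert (0 < / (a * (a - 1))) by (apply Rinv_0_lt_compat; lra).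
    assert (0 < / - beta) by (apply Rinv_0_lt_compat; lra).
    assert (0 <= a * a / - beta) by (apply Rdiv_le_0_compat; nra). lra. }
  set (g := time_inv P K Pc P0 P1 Pg hK).
  assert (gd : forall t, is_derive g t (P (g t))) by (intros; apply time_inv_derive).
  assert (gpos : forall t, 0 < t -> 0 < g t) by (intros; apply time_inv_pos; auto).
  set (rhs := fun s => profile_rhs a (a * (a - 1)) (- beta) p s (P s)).
  exists g, (fun t => P (g t)), (fun t => rhs (g t) * P (g t)).
  split; [|split; [|split]].
  - apply (Cinf_autonomous P); auto.
    apply (profile_P_smooth a (a * (a - 1)) (- beta) p); auto; lra.
  - apply time_inv_0.
  - exact (derive_continuous _ _ _ (gd 0)).
  - intros t ht. assert (hg := gpos t ht). assert (hP := P1 (g t)).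
    assert (hd : 0 < a * (a - 1) * g t + - beta * P (g t)) by nra.
    split; [auto|split; [auto|split; [|split]]].
    + rewrite Rmult_comm. apply (derive_comp P g); auto.
    + apply Rmult_lt_0_compat; [|lra]. unfold rhs, profile_rhs.
      apply Rdiv_lt_0_compat; [|nra]. generalize (Rpower_pos (g t) p). nra.
    + unfold rhs, profile_rhs. field. split; lra.
Qed.

(** The ansatz [u(x, y) = y^c phi(x + beta ln y)].  With [r0 = 1] the wiping
    domain is [{t > 0}] and its boundary curve is [{t = 0}] for the similarity
    variable [t = x + beta ln y]. *)
Definition ansatz (c beta : R) (phi : R -> R) (z : R * R) : R :=
  Rpower (snd z) c * phi (fst z + beta * ln (snd z)).

Lemma Sigma1_iff beta z : Sigma beta 1 z <-> 0 < snd z /\ 0 < fst z + beta * ln (snd z).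
Proof.
  unfold Sigma, Rpower. rewrite <- exp_plus. split; intros [hy h]; split; auto.
  - apply exp_lt_inv. rewrite exp_0. lra.
  - rewrite <- exp_0. apply Rlt_gt, exp_increasing. auto.
Qed.

Lemma varsigma1_t beta z : varsigma beta 1 z -> 0 < snd z /\ fst z + beta * ln (snd z) = 0.
Proof.
  unfold varsigma, Rpower. rewrite <- exp_plus. intros [hy h]. split; auto.
  apply exp_inv. rewrite exp_0. auto.
Qed.

Lemma ansatz_cont c beta phi (z : R * R) : 0 < snd z ->
  continuous phi (fst z + beta * ln (snd z)) -> continuous (ansatz c beta phi) z.
Proof.
  destruct z as [x y]; simpl. intros hy hphi. unfold ansatz.
  apply (continuous_mult (K := R_AbsRing) (fun z : R * R => Rpower (snd z) c)
           (fun z : R * R => phi (fst z + beta * ln (snd z)))).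
  - apply (continuous_comp (fun z : R * R => snd z) (fun y => Rpower y c));
      [apply continuous_snd | exact (derive_continuous _ _ _ (derive_rpow c y hy))].
  - apply (continuous_comp (fun z : R * R => fst z + beta * ln (snd z)) phi); auto.
    apply (continuous_plus (fun z : R * R => fst z) (fun z : R * R => beta * ln (snd z)));
      [apply continuous_fst|].
    apply (continuous_scal_r beta (fun z : R * R => ln (snd z))).
    apply (continuous_comp (fun z : R * R => snd z) ln); [apply continuous_snd|].
    exact (derive_continuous _ _ _ (is_derive_ln y hy)).
Qed.

(** First partial derivatives of the ansatz: [u_x = y^c phi'] and
    [u_y = y^(c-1) (c phi + beta phi')], again of the same form. *)
Lemma ansatz_dx c beta (phi : R -> R) x y dphi :
  is_derive phi (x + beta * ln y) dphi ->
  is_derive (fun s => Rpower y c * phi (s + beta * ln y)) x (Rpower y c * dphi).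
Proof.
  intros H. apply is_derive_scal, (derive_eq _ _ (1 * dphi)); [ring|].
  apply (derive_comp phi (fun s => s + beta * ln y)); auto.
  apply (derive_eq _ _ (1 + 0)); [ring|].
  apply derive_plus; [apply derive_id | apply derive_const].
Qed.

Lemma ansatz_dy c beta (phi : R -> R) x y dphi : 0 < y ->
  is_derive phi (x + beta * ln y) dphi ->
  is_derive (fun t => Rpower t c * phi (x + beta * ln t)) y
    (Rpower y (c - 1) * (c * phi (x + beta * ln y) + beta * dphi)).
Proof.
  intros hy H.
  assert (Dt : is_derive (fun t => x + beta * ln t) y (0 + beta * / y)).
  { apply derive_plus; [apply derive_const | apply is_derive_scal, is_derive_ln; auto]. }
  eapply derive_eq;
    [|apply derive_mult; [apply derive_rpow; auto | apply (derive_comp phi); eauto]].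
  cbv beta. rewrite (Rpower_pred y c hy). field. lra.
Qed.

Lemma ansatz_Ck2 beta k : forall c phi, Cinf phi -> Ck2 k (Sigma beta 1) (ansatz c beta phi).
Proof.
  induction k as [|k IH]; intros c phi Cp.
  - intros z hz. apply Sigma1_iff in hz as [hy ht].
    apply ansatz_cont; auto. apply (Cn_cont 0); auto.
  - split.
    { intros z hz. apply Sigma1_iff in hz as [hy ht].
      apply ansatz_cont; auto. apply (Cn_cont 0); auto. }
    destruct (Cinf_Derive phi Cp) as [Dp Cd].
    exists (ansatz c beta (Derive phi)).
    exists (ansatz (c - 1) beta (fun t => c * phi t + beta * Derive phi t)).
    split; [|split].
    + intros [x y] hz. apply Sigma1_iff in hz as [hy ht]; simpl in *.
      split; [apply ansatz_dx | apply ansatz_dy]; auto.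
    + apply IH; auto.
    + apply IH. intros n. apply Cn_plus; apply Cn_mult; auto; apply Cn_const.
Qed.

Lemma Derive_2_loc (f f1 : R -> R) x l :
  locally x (fun s => is_derive f s (f1 s)) -> is_derive f1 x l -> Derive_n f 2 x = l.
Proof.
  intros H1 H2. simpl. rewrite (Derive_ext_loc _ f1); [apply is_derive_unique; auto|].
  apply (filter_imp (fun s => is_derive f s (f1 s))); auto.
  intros s hs. apply is_derive_unique. auto.
Qed.

Lemma locally_pos_cont (h : R -> R) x : continuous h x -> 0 < h x ->
  locally x (fun s => 0 < h s).
Proof. intros Hc hpos. apply Hc, locally_pos, hpos. Qed.

Section AnsatzHessian.

Variables a beta p : R.
Variables g g1 g2 : R -> R.
Hypothesis homogeneity : a * p = 2 * a - 2.
Hypothesis sol : profile_solution a beta p g g1 g2.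

Let Sol s : 0 < s -> is_derive g s (g1 s) /\ is_derive g1 s (g2 s).
Proof. intros hs. destruct (sol s hs) as (_ & ? & ? & _). auto. Qed.

Lemma ansatz_d_xx x y : 0 < y -> 0 < x + beta * ln y ->
  d_xx (ansatz a beta g) (x, y) = Rpower y a * g2 (x + beta * ln y).
Proof.
  intros hy ht. unfold d_xx, ansatz; simpl.
  apply (Derive_2_loc _ (fun s => Rpower y a * g1 (s + beta * ln y))).
  - assert (Hc : continuous (fun s => s + beta * ln y) x)
      by (apply continuous_Rplus; [apply continuous_id | apply continuous_const]).
    generalize (locally_pos_cont _ x Hc ht). apply filter_imp.
    intros s hs. apply ansatz_dx, Sol, hs.
  - apply ansatz_dx, Sol, ht.
Qed.

Lemma ansatz_d_yy x y : 0 < y -> 0 < x + beta * ln y ->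
  d_yy (ansatz a beta g) (x, y) =
  Rpower y (a - 1 - 1) * ((a - 1) * (a * g (x + beta * ln y) + beta * g1 (x + beta * ln y))
                          + beta * (a * g1 (x + beta * ln y) + beta * g2 (x + beta * ln y))).
Proof.
  intros hy ht. unfold d_yy, ansatz; simpl.
  assert (Hc : continuous (fun s => x + beta * ln s) y).
  { apply continuous_Rplus; [apply continuous_const|].
    apply continuous_Rmult; [apply continuous_const|].
    exact (derive_continuous _ _ _ (is_derive_ln y hy)). }
  apply (Derive_2_loc _
    (fun s => Rpower s (a - 1) * (fun u => a * g u + beta * g1 u) (x + beta * ln s))).
  - generalize (filter_and _ _ (locally_pos y hy) (locally_pos_cont _ y Hc ht)).
    apply filter_imp. intros s [hs hts]. apply ansatz_dy, Sol; auto.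
  - apply (ansatz_dy (a - 1) beta (fun u => a * g u + beta * g1 u)); auto.
    apply derive_plus; apply is_derive_scal, Sol; auto.
Qed.

Lemma ansatz_d_xy x y : 0 < y -> 0 < x + beta * ln y ->
  d_xy (ansatz a beta g) (x, y) =
  Rpower y (a - 1) * (a * g1 (x + beta * ln y) + beta * g2 (x + beta * ln y)).
Proof.
  intros hy ht. unfold d_xy, ansatz; simpl.
  assert (Hc : continuous (fun s => x + beta * ln s) y).
  { apply continuous_Rplus; [apply continuous_const|].
    apply continuous_Rmult; [apply continuous_const|].
    exact (derive_continuous _ _ _ (is_derive_ln y hy)). }
  rewrite (Derive_ext_loc _ (fun s => Rpower s a * g1 (x + beta * ln s))).
  - apply is_derive_unique, ansatz_dy, Sol; auto.
  - generalize (locally_pos_cont _ y Hc ht). apply filter_imp.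
    intros s hs. apply is_derive_unique, ansatz_dx, Sol, hs.
Qed.

(** [det D^2 u = y^(2a-2) (g'' (a (a-1) g - beta g') - a^2 g'^2)
    = y^(a p) g^p = u^p], by the profile equation and [a p = 2a - 2]. *)
Lemma ansatz_hess_det z : Sigma beta 1 z ->
  hess_det (ansatz a beta g) z = Rpower (ansatz a beta g z) p.
Proof.
  intros hz. apply Sigma1_iff in hz as [hy ht]. destruct z as [x y]; simpl in *.
  unfold hess_det. rewrite ansatz_d_xx, ansatz_d_yy, ansatz_d_xy by auto.
  unfold ansatz; simpl. set (t := x + beta * ln y) in *.
  destruct (sol t ht) as (hg & _ & _ & _ & E).
  assert (Hup : Rpower (Rpower y a * g t) p = Rpower y (a - 1) * Rpower y (a - 1) * Rpower (g t) p).
  { rewrite <- Rpower_mult_distr by (auto; apply Rpower_pos).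
    rewrite Rpower_mult, homogeneity, <- Rpower_plus. do 2 f_equal. ring. }
  assert (Ya1 : Rpower y (a - 1) = Rpower y (a - 1 - 1) * y) by (apply Rpower_pred, hy).
  assert (Ya : Rpower y a = Rpower y (a - 1 - 1) * y * y) by (rewrite <- Ya1; apply Rpower_pred, hy).
  rewrite Hup, <- E, Ya, Ya1. ring.
Qed.

End AnsatzHessian.

Lemma convex_of_second_derivative (f df d2f : R -> R) :
  (forall t, 0 <= t <= 1 -> is_derive f t (df t)) ->
  (forall t, 0 <= t <= 1 -> is_derive df t (d2f t)) ->
  (forall t, 0 <= t <= 1 -> 0 <= d2f t) ->
  forall t, 0 <= t <= 1 -> f t <= t * f 1 + (1 - t) * f 0.
Proof.
  intros D1 D2 Pos.
  assert (MVT : forall (h d : R -> R) x y, (forall t, 0 <= t <= 1 -> is_derive h t (d t)) ->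
            0 <= x -> x < y -> y <= 1 -> exists c, x <= c <= y /\ h y - h x = d c * (y - x)).
  { intros h d x y D h1 h2 h3. destruct (MVT_gen h x y d) as [c [hc E]].
    - rewrite Rmin_left, Rmax_right by lra. intros; apply D; lra.
    - rewrite Rmin_left, Rmax_right by lra. intros z hz.
      apply continuity_pt_filterlim, (derive_continuous _ _ (d z)), D. lra.
    - rewrite Rmin_left, Rmax_right in hc by lra. exists c; auto. }
  assert (Mono : forall x y, 0 <= x -> x <= y -> y <= 1 -> df x <= df y).
  { intros x y h1 [h2|h2] h3; [|subst; lra].
    destruct (MVT df d2f x y D2 h1 h2 h3) as [c [hc E]].
    assert (0 <= d2f c) by (apply Pos; lra). nra. }
  intros t ht.
  destruct (Req_dec t 0) as [->|h0]; [lra|]. destruct (Req_dec t 1) as [->|h1]; [lra|].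
  destruct (MVT f df 0 t D1 ltac:(lra) ltac:(lra) ltac:(lra)) as [c1 [hc1 E1]].
  destruct (MVT f df t 1 D1 ltac:(lra) ltac:(lra) ltac:(lra)) as [c2 [hc2 E2]].
  assert (M := Mono c1 c2 ltac:(lra) ltac:(lra) ltac:(lra)).
  assert (0 <= t * (1 - t) * (df c2 - df c1)) by (apply Rmult_le_pos; [apply Rmult_le_pos|]; lra).
  nra.
Qed.

Lemma quad_form_nonneg G2 G1 C a w e : 0 < G2 -> 0 <= G2 * C - a * a * (G1 * G1) ->
  0 <= G2 * (w * w) + 2 * a * e * w * G1 + C * (e * e).
Proof.
  intros h1 h2. apply Rmult_le_reg_l with G2; auto. rewrite Rmult_0_r.
  replace (G2 * (G2 * (w * w) + 2 * a * e * w * G1 + C * (e * e))) with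
    ((G2 * w + a * G1 * e) * (G2 * w + a * G1 * e) + (G2 * C - a * a * (G1 * G1)) * (e * e))
    by ring.
  apply Rplus_le_le_0_compat; [apply Rle_0_sqr | apply Rmult_le_pos; auto; apply Rle_0_sqr].
Qed.

Section AnsatzConvexity.

Variables a beta p : R.
Variables g g1 g2 : R -> R.
Hypothesis sol : profile_solution a beta p g g1 g2.

Section Segment.

(** With [e = y'/y] and [w = t'] along the
    segment, [u' = y^a (a e g + w g')] and
    [u'' = y^a (g'' w^2 + 2 a e w g' + (a (a-1) g - beta g') e^2)], a quadratic
    form in [(w, e)] whose discriminant is [g^p > 0] by the profile equation. *)

Variables a1 a2 b1 b2 : R.

Definition seg_y (s : R) : R := s * a2 + (1 - s) * b2.
Definition seg_t (s : R) : R := s * a1 + (1 - s) * b1 + beta * ln (seg_y s).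
Definition seg_e (s : R) : R := (a2 - b2) / seg_y s.
Definition seg_w (s : R) : R := (a1 - b1) + beta * seg_e s.
Definition seg_u (s : R) : R := Rpower (seg_y s) a * g (seg_t s).
Definition seg_u1 (s : R) : R :=
  Rpower (seg_y s) a * (a * seg_e s * g (seg_t s) + seg_w s * g1 (seg_t s)).
Definition seg_u2 (s : R) : R :=
  Rpower (seg_y s) a *
  (g2 (seg_t s) * (seg_w s * seg_w s) + 2 * a * seg_e s * seg_w s * g1 (seg_t s)
   + (a * (a - 1) * g (seg_t s) - beta * g1 (seg_t s)) * (seg_e s * seg_e s)).

Lemma seg_derivs s : 0 < seg_y s -> 0 < seg_t s ->
  is_derive seg_u s (seg_u1 s) /\ is_derive seg_u1 s (seg_u2 s) /\ 0 <= seg_u2 s.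
Proof.
  intros hy ht. destruct (sol _ ht) as (hg & Dg & Dg1 & hg2 & E).
  assert (Ht : is_derive seg_t s (seg_w s)).
  { unfold seg_t, seg_w, seg_e, seg_y in *. auto_derive; [lra | field; lra]. }
  assert (He : is_derive seg_e s (- (seg_e s * seg_e s))).
  { unfold seg_e, seg_y in *. auto_derive; [lra | field; lra]. }
  assert (Hw : is_derive seg_w s (- beta * (seg_e s * seg_e s))).
  { unfold seg_w. eapply derive_eq;
      [|apply derive_plus; [apply derive_const | apply is_derive_scal, He]]. ring. }
  assert (Hya : is_derive (fun s => Rpower (seg_y s) a) s (a * seg_e s * Rpower (seg_y s) a)).
  { assert (Hy : is_derive seg_y s (a2 - b2)) by (unfold seg_y; auto_derive; [exact I | ring]).
    eapply derive_eq; [|apply (derive_comp (fun y => Rpower y a) seg_y); [apply derive_rpow, hy | apply Hy]].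
    unfold seg_e. rewrite (Rpower_pred (seg_y s) a hy). field. lra. }
  assert (Hg : is_derive (fun s => g (seg_t s)) s (seg_w s * g1 (seg_t s)))
    by (apply (derive_comp g seg_t); auto).
  assert (Hg1 : is_derive (fun s => g1 (seg_t s)) s (seg_w s * g2 (seg_t s)))
    by (apply (derive_comp g1 seg_t); auto).
  split; [|split].
  - unfold seg_u. eapply derive_eq; [|apply derive_mult; [apply Hya | apply Hg]].
    unfold seg_u1. ring.
  - assert (Hin : is_derive (fun s => a * seg_e s * g (seg_t s) + seg_w s * g1 (seg_t s)) s
      (a * - (seg_e s * seg_e s) * g (seg_t s) + a * seg_e s * (seg_w s * g1 (seg_t s))
       + (- beta * (seg_e s * seg_e s) * g1 (seg_t s) + seg_w s * (seg_w s * g2 (seg_t s))))).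
    { apply derive_plus.
      - apply (derive_mult (fun s => a * seg_e s) (fun s => g (seg_t s)));
          [apply is_derive_scal, He | exact Hg].
      - apply (derive_mult seg_w (fun s => g1 (seg_t s))); auto. }
    unfold seg_u1. eapply derive_eq; [|apply derive_mult; [apply Hya | apply Hin]].
    unfold seg_u2. ring.
  - unfold seg_u2. apply Rmult_le_pos; [left; apply Rpower_pos|].
    apply quad_form_nonneg; auto. rewrite E. left; apply Rpower_pos.
Qed.

Lemma segment_below_chord :
  (forall s, 0 <= s <= 1 -> Sigma beta 1 (s * a1 + (1 - s) * b1, s * a2 + (1 - s) * b2)) ->
  forall s, 0 <= s <= 1 ->
  ansatz a beta g (s * a1 + (1 - s) * b1, s * a2 + (1 - s) * b2)
    <= s * ansatz a beta g (a1, a2) + (1 - s) * ansatz a beta g (b1, b2).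
Proof.
  intros Hseg.
  assert (Hin : forall s, 0 <= s <= 1 -> 0 < seg_y s /\ 0 < seg_t s)
    by (intros s hs; exact (proj1 (Sigma1_iff beta _) (Hseg s hs))).
  assert (C := convex_of_second_derivative seg_u seg_u1 seg_u2).
  intros s hs. specialize (C
    (fun s hs => proj1 (seg_derivs s (proj1 (Hin s hs)) (proj2 (Hin s hs))))
    (fun s hs => proj1 (proj2 (seg_derivs s (proj1 (Hin s hs)) (proj2 (Hin s hs)))))
    (fun s hs => proj2 (proj2 (seg_derivs s (proj1 (Hin s hs)) (proj2 (Hin s hs))))) s hs).
  unfold seg_u, seg_t, seg_y in C. unfold ansatz; simpl.
  replace (1 * a1 + (1 - 1) * b1) with a1 in C by ring.
  replace (1 * a2 + (1 - 1) * b2) with a2 in C by ring.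
  replace (0 * a1 + (1 - 0) * b1) with b1 in C by ring.
  replace (0 * a2 + (1 - 0) * b2) with b2 in C by ring.
  exact C.
Qed.

End Segment.

Lemma ansatz_convex : convex_on2 (Sigma beta 1) (ansatz a beta g).
Proof. intros [a1 a2] [b1 b2]. apply segment_below_chord. Qed.

End AnsatzConvexity.

(** Main theorem: with [a = 2 / (2 - p)] (so that [a > 1] and [a p = 2a - 2])
    and [r0 = 1], the function [u = y^a g(x + beta ln y)] built on the profile
    [g] has all the required properties. *)
Theorem proposition7p1 (p beta : R) (hp : 0 < p < 1 / 2) (hbeta : beta < 0) :
  exists r0 : R, 0 < r0 /\
  exists u : R * R -> R,
    convex_on2 (Sigma beta r0) u /\
    smooth_on2 (Sigma beta r0) u /\
    (* continuous up to the boundary curve *)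
    (forall z, varsigma beta r0 z ->
       filterlim u
         (within (fun w => Sigma beta r0 w \/ varsigma beta r0 w) (locally z))
         (locally (u z))) /\
    (forall z, Sigma beta r0 z -> 0 < u z) /\
    (forall z, Sigma beta r0 z -> hess_det u z = Rpower (u z) p) /\
    (forall z, varsigma beta r0 z -> u z = 0).
Proof.
  set (a := 2 / (2 - p)).
  assert (ha : 1 < a) by (unfold a; apply Rmult_lt_reg_r with (2 - p); [lra | field_simplify; lra]).
  assert (hap : a * p = 2 * a - 2) by (unfold a; field; lra).
  destruct (profile_exists a beta p ha hbeta ltac:(lra)) as (g & g1 & g2 & Cg & g0 & gc & sol).
  exists 1. split; [lra|].
  exists (ansatz a beta g).
  split; [|split; [|split; [|split; [|split]]]].
  - exact (ansatz_convex a beta p g g1 g2 sol).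
  - intros k. apply ansatz_Ck2, Cg.
  - intros z hz. destruct (varsigma1_t beta z hz) as [hy ht].
    apply (filterlim_filter_le_1 (F := locally z)); [apply filter_le_within|].
    apply ansatz_cont; auto. rewrite ht. exact gc.
  - intros z hz. apply Sigma1_iff in hz as [hy ht].
    apply Rmult_lt_0_compat; [apply Rpower_pos | apply (sol _ ht)].
  - exact (ansatz_hess_det a beta p g g1 g2 hap sol).
  - intros z hz. destruct (varsigma1_t beta z hz) as [_ ht].
    unfold ansatz. rewrite ht, g0. ring.
Qed.
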